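(* Let $K\ge1$. Every $L$-layer MinAgg GNN with $L<K$ has nonzero error on the training pair $(H^{(0)}_K,\Gamma^K(H^{(0)}_K))$: there is $w\in\{v_K,u_K\}$ with $h^{(L)}_w(H^{(0)}_K)\ne x_w(\Gamma^K(H^{(0)}_K))$.
   Context: Attributed graphs: $G=(V,E,X_{\mathrm v},X_{\mathrm e})$ with $V$ finite, undirected edges, nonnegative edge weights and nonnegative node features; every node has a self-loop of weight $0$ and $\mathcal N(v)=\{v\}\cup\{u:\{u,v\}\in E\}$. A large constant $\beta>0$ encodes ''infinite distance''. $x_v(H)$ is the feature of $v$ in $H$. The Bellman–Ford operator $\Gamma$ sends $G$ to the graph with the same vertices, edges and weights and node features $x'_v=\min\{x_u+x_{(u,v)}:u\in\mathcal N(v)\}$; $\Gamma^K$ is its $K$-fold iterate. The graph $H^{(0)}_K$: vertices $v_0,\dots,v_K,u_0,\dots,u_K$; edges $\{v_{i-1},v_i\}$, $\{u_{i-1},u_i\}$, $\{u_{i-1},v_i\}$, $\{v_{i-1},u_i\}$ for $i\in[K]$; weights $1$ on $\{u_{i-1},v_i\}$ and $\{v_{i-1},u_i\}$, $0$ on $\{v_{i-1},v_i\}$ and $\{u_{i-1},u_i\}$; node features $x_{v_0}=0$, $x_w=\beta$ otherwise. MinAgg GNN: for each $\ell\in[L]$, ReLU MLPs ($x^{(j)}=\sigma(W_jx^{(j-1)}+b_j)$) $f^{\mathrm{agg},(\ell)}:\mathbb R^{d_{\ell-1}+1}\to\mathbb R^d$ and $f^{\mathrm{up},(\ell)}:\mathbb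 R^{d+d_{\ell-1}}\to\mathbb R^{d_\ell}$, $d_0=d_L=1$, $d_\ell=d$ otherwise; $h^{(0)}_v=x_v$ and $h^{(\ell)}_v=f^{\mathrm{up},(\ell)}\big(\min_{u\in\mathcal N(v)}f^{\mathrm{agg},(\ell)}(h^{(\ell-1)}_u\oplus x_{(u,v)})\oplus h^{(\ell-1)}_v\big)$ (coordinatewise min, $\oplus$ concatenation). *)

From HB Require Import structures.
From mathcomp Require Import all_boot all_order all_algebra.
Set Implicit Arguments. Unset Strict Implicit. Unset Printing Implicit Defensive.
Import Order.TTheory GRing.Theory Num.Theory.
Local Open Scope ring_scope.

Section Defs.
Variable R : realFieldType.

Definition relu (a : R) : R := Num.max 0 a.

Inductive mlp : nat -> nat -> Type :=
| MLPone n m (W : 'M[R]_(m, n)) (b : 'cV[R]_m) : mlp n m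
| MLPcons n m p (W : 'M[R]_(m, n)) (b : 'cV[R]_m) (f : mlp m p) : mlp n p.

Fixpoint mlp_eval n m (f : mlp n m) : 'cV[R]_n -> 'cV[R]_m :=
  match f in mlp n m return 'cV[R]_n -> 'cV[R]_m with
  | MLPone _ _ W b => fun x => map_mx relu (W *m x + b)
  | MLPcons _ _ _ W b f' => fun x => mlp_eval f' (map_mx relu (W *m x + b))
  end.

Variable T : finType.
Variable adj : rel T.
Variable ew : T -> T -> R.     (* edge weight x_(u,v); self-loop weight ew v v *)

Definition nbhd (v u : T) : bool := (u == v) || adj u v.

(* minimum of F over N(v) (nonempty since v ∈ N(v)) *)
Definition nmin (F : T -> R) (v : T) : R :=
  \big[Num.min/F v]_(u | nbhd v u) F u.

(* Bellman–Ford operator on node features; Γ^K is its K-fold iterate *)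
Definition bf_step (x : T -> R) : T -> R :=
  fun v => nmin (fun u => x u + ew u v) v.

Definition bf_iter (K : nat) (x : T -> R) : T -> R := iter K bf_step x.

Definition vmin d (F : T -> 'cV[R]_d) (v : T) : 'cV[R]_d :=
  \col_i nmin (fun u => F u i 0) v.

(* MinAgg GNN with L layers and hidden width d: d_0 = d_L = 1, d_l = d else *)
Definition gdim (L d l : nat) : nat := if l == 0%N then 1%N else if l == L then 1%N else d.

Variables (L d : nat).
Variable fagg : forall l : nat, mlp (gdim L d l + 1) d.
Variable fup : forall l : nat, mlp (d + gdim L d l) (gdim L d l.+1).
Variable x : T -> R.

Definition gnn_layer (l : nat) (h : T -> 'cV[R]_(gdim L d l)) : T -> 'cV[R]_(gdim L d l.+1) :=
  fun v => mlp_eval (fup l)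
     (col_mx (vmin (fun u => mlp_eval (fagg l) (col_mx (h u) (const_mx (ew u v)))) v)
             (h v)).

Fixpoint gnn_hidden (l : nat) : T -> 'cV[R]_(gdim L d l) :=
  match l return T -> 'cV[R]_(gdim L d l) with
  | 0 => fun v => const_mx (x v)
  | l'.+1 => gnn_layer (gnn_hidden l')
  end.

End Defs.

(* The graph H^(0)_K: vertices (false, i) = v_i and (true, i) = u_i, i = 0..K. *)
Definition HV (K : nat) : finType := (bool * 'I_K.+1)%type.

(* edges: {v_{i-1},v_i}, {u_{i-1},u_i}, {u_{i-1},v_i}, {v_{i-1},u_i} *)
Definition H_adj (K : nat) : rel (HV K) :=
  fun a b => (nat_of_ord a.2 == (nat_of_ord b.2).+1) || (nat_of_ord b.2 == (nat_of_ord a.2).+1).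

Definition H_w (R : realFieldType) (K : nat) : HV K -> HV K -> R :=
  fun a b => if a.1 == b.1 then 0 else 1.

Definition H_x (R : realFieldType) (beta : R) (K : nat) : HV K -> R :=
  fun a => if (a.1 == false) && (nat_of_ord a.2 == 0%N) then 0 else beta.

Definition vK (K : nat) : HV K := (false, ord_max).
Definition uK (K : nat) : HV K := (true, ord_max).

(** Flipping the letter of every vertex ([v_i <-> u_i]) preserves adjacency and
    edge weights of [H^(0)_K], and changes the input features only at level 0.
    Since an [l]-layer message-passing network sees only the [l]-neighbourhood
    of a vertex, its output is flip-invariant at every vertex of level [> l]; in
    particular an [L]-layer MinAgg GNN with [L < K] gives [v_K] and [u_K] the
    same value.  Bellman–Ford, however, assigns [0] to [v_K] (through the path of
    zero-weight edges [v_0 ... v_K]) and a positive value to [u_K] (every path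
    into a [u]-vertex starts at some [u_j], of feature [beta], or crosses an edge
    of weight [1]), so the network errs at one of the two vertices. *)

From mathcomp Require Import all_boot all_order all_algebra.
From mathcomp Require Import zify.
Import Order.TTheory GRing.Theory Num.Theory.
Local Open Scope ring_scope.
Set Implicit Arguments.
Unset Strict Implicit.

Lemma const_mx_inj (T : Type) (m n : nat) (a b : T) :
  (0 < m)%N -> (0 < n)%N -> const_mx a = const_mx b :> 'M[T]_(m, n) -> a = b.
Proof. by case: m n => [|m] [|n] // _ _ /matrixP/(_ ord0 ord0); rewrite !mxE. Qed.

Lemma gdim_last (L d : nat) : gdim L d L = 1%N.
Proof. by rewrite /gdim eqxx; case: eqP. Qed.

Section NeighbourhoodMin.
Variables (R : realFieldType) (T : finType) (adj : rel T).

Lemma nbhd_refl (v : T) : nbhd adj v v.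
Proof. by rewrite /nbhd eqxx. Qed.

Lemma nmin_le (F : T -> R) (v u : T) : nbhd adj v u -> nmin adj F v <= F u.
Proof. exact: bigmin_le_cond. Qed.

Lemma nmin_ge (c : R) (F : T -> R) (v : T) :
  (forall u, nbhd adj v u -> c <= F u) -> c <= nmin adj F v.
Proof. by move=> cF; apply/bigmin_geP; split=> [|u /cF//]; apply/cF/nbhd_refl. Qed.

Lemma nmin_gt (c : R) (F : T -> R) (v : T) :
  (forall u, nbhd adj v u -> c < F u) -> c < nmin adj F v.
Proof. by move=> cF; apply/bigmin_gtP; split=> [|u /cF//]; apply/cF/nbhd_refl. Qed.

Lemma eq_nmin (F G : T -> R) (v : T) :
  (forall u, nbhd adj v u -> F u = G u) -> nmin adj F v = nmin adj G v.
Proof.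
move=> FG; rewrite /nmin FG; last exact: nbhd_refl.
by apply: eq_bigr => u /FG.
Qed.

Lemma nmin_automorphism (s : T -> T) (F : T -> R) (v : T) :
  injective s -> (forall u w, adj (s u) (s w) = adj u w) ->
  nmin adj F (s v) = nmin adj (F \o s) v.
Proof.
move=> s_inj adj_s; rewrite /nmin (reindex_inj s_inj).
by apply: eq_bigl => u; rewrite /nbhd adj_s (inj_eq s_inj).
Qed.

End NeighbourhoodMin.

Section Locality.
Variables (R : realFieldType) (T : finType) (adj : rel T) (ew : T -> T -> R).
Variables (L d : nat) (fagg : forall l : nat, mlp R (gdim L d l + 1) d).
Variables (fup : forall l : nat, mlp R (d + gdim L d l) (gdim L d l.+1)).
Variable x : T -> R.

Variable s : T -> T.
Hypothesis s_inj : injective s.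
Hypothesis adj_s : forall u w, adj (s u) (s w) = adj u w.
Hypothesis ew_s : forall u w, ew (s u) (s w) = ew u w.

(* [lev] bounds the distance to the vertices where [s] may change the features. *)
Variable lev : T -> nat.
Hypothesis lev_nbhd : forall v u, nbhd adj v u -> (lev v <= (lev u).+1)%N.
Hypothesis x_s : forall u, (0 < lev u)%N -> x (s u) = x u.

Lemma gnn_hidden_automorphism (l : nat) (v : T) :
  (l < lev v)%N -> gnn_hidden adj ew fagg fup x l (s v) = gnn_hidden adj ew fagg fup x l v.
Proof.
elim: l v => [|l IH] v lv /=; first by rewrite x_s.
rewrite /gnn_layer IH; last by lia.
congr (mlp_eval _ (col_mx _ _)); apply/matrixP => i j; rewrite !mxE.
rewrite nmin_automorphism //; apply: eq_nmin => u uv /=.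
by rewrite ew_s IH //; have := lev_nbhd uv; lia.
Qed.

End Locality.

Lemma bf_iterS (R : realFieldType) (T : finType) (adj : rel T) (ew : T -> T -> R)
  (x : T -> R) (t : nat) (v : T) :
  bf_iter adj ew t.+1 x v = nmin adj (fun u => bf_iter adj ew t x u + ew u v) v.
Proof. by []. Qed.

Lemma bf_iter_ge0 (R : realFieldType) (T : finType) (adj : rel T) (ew : T -> T -> R)
  (x : T -> R) (t : nat) (v : T) :
  (forall u w, 0 <= ew u w) -> (forall u, 0 <= x u) -> 0 <= bf_iter adj ew t x v.
Proof.
move=> ew_ge0 x_ge0; elim: t v => [|t IH] v //.
by rewrite bf_iterS; apply: nmin_ge => u _; rewrite addr_ge0.
Qed.

Section TrainingGraph.
Variables (R : realFieldType) (beta : R) (K : nat).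

Definition swap_letter (u : HV K) : HV K := (~~ u.1, u.2).

Lemma swap_letter_inj : injective swap_letter.
Proof. by move=> [a i] [b j] [/negb_inj -> ->]. Qed.

Lemma H_adj_swap (u w : HV K) : H_adj (swap_letter u) (swap_letter w) = H_adj u w.
Proof. by []. Qed.

Lemma H_w_swap (u w : HV K) : H_w R (swap_letter u) (swap_letter w) = H_w R u w.
Proof. by rewrite /H_w /=; case: u.1; case: w.1. Qed.

Lemma H_x_swap (u : HV K) : (0 < u.2)%N -> H_x beta (swap_letter u) = H_x beta u.
Proof. by move=> u_gt0; rewrite /H_x /=; case: u.1; rewrite /= ?gtn_eqF ?andbF. Qed.

Lemma H_nbhd_level (v u : HV K) : nbhd (@H_adj K) v u -> (v.2 <= u.2.+1)%N.
Proof. by rewrite /nbhd /H_adj => /orP[/eqP -> | /orP[] /eqP]; lia. Qed.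

Lemma H_w_ge0 (u w : HV K) : 0 <= H_w R u w.
Proof. by rewrite /H_w; case: ifP. Qed.

Hypothesis beta_gt0 : 0 < beta.

Lemma H_x_ge0 (u : HV K) : 0 <= H_x beta u.
Proof. by rewrite /H_x; case: ifP => // _; apply: ltW. Qed.

Local Notation y t := (bf_iter (@H_adj K) (@H_w R K) t (@H_x R beta K)).

Lemma bf_iter_H_ge0 (t : nat) (u : HV K) : 0 <= y t u.
Proof. exact: bf_iter_ge0 H_w_ge0 H_x_ge0. Qed.

Lemma bf_iter_H_u_gt0 (t : nat) (i : 'I_K.+1) : 0 < y t (true, i).
Proof.
elim: t i => [|t IH] i //; rewrite bf_iterS; apply: nmin_gt => -[[] j] _.
  by rewrite ltr_wpDr ?H_w_ge0.
by rewrite /H_w /= ltr_wpDl ?ltr01 ?bf_iter_H_ge0.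
Qed.

(* The witness is the predecessor [v_(i-1)], or [v_0] itself when [i = 0]. *)
Lemma bf_iter_H_v_eq0 (t : nat) (i : 'I_K.+1) : (i <= t)%N -> y t (false, i) = 0.
Proof.
elim: t i => [|t IH] i it.
  by rewrite /= /H_x /= (_ : nat_of_ord i == 0%N) //; apply/eqP; lia.
apply/le_anti; rewrite bf_iter_H_ge0 andbT.
have i_le : (i.-1 < K.+1)%N by have := ltn_ord i; lia.
have pred_nbhd : nbhd (@H_adj K) (false, i) (false, inord i.-1).
  rewrite /nbhd /H_adj /= xpair_eqE /= -val_eqE /= inordK //.
  by case: (nat_of_ord i) => [|n]; rewrite /= ?eqxx ?orbT.
rewrite bf_iterS; apply: le_trans (nmin_le _ pred_nbhd) _.
by rewrite /= IH ?inordK /H_w ?eqxx ?addr0 //; lia.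
Qed.

End TrainingGraph.

Theorem mainTheorem8 (R : realFieldType) (beta : R) (hbeta : 0 < beta)
  (K : nat) (hK : (1 <= K)%N) (L d : nat) (hL : (L < K)%N)
  (fagg : forall l : nat, mlp R (gdim L d l + 1) d)
  (fup : forall l : nat, mlp R (d + gdim L d l) (gdim L d l.+1)) :
  exists w : HV K, (w \in [:: vK K; uK K]) /\
    gnn_hidden (H_adj (K:=K)) (H_w R (K:=K)) fagg fup (H_x beta (K:=K)) L w
      != const_mx (bf_iter (H_adj (K:=K)) (H_w R (K:=K)) K (H_x beta (K:=K)) w).
Proof.
set h := gnn_hidden _ _ _ _ _ L; set y := bf_iter _ _ K _.
have h_uv : h (uK K) = h (vK K) :=
  gnn_hidden_automorphism fagg fup (@swap_letter_inj K) (@H_adj_swap K)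
           (@H_w_swap R K) (@H_nbhd_level K) (@H_x_swap R beta K) (v := vK K) hL.
have y_v : y (vK K) = 0 by apply: bf_iter_H_v_eq0.
have y_u : 0 < y (uK K) by apply: bf_iter_H_u_gt0.
have [h_v | h_v] := eqVneq (h (vK K)) (const_mx (y (vK K))); last first.
  by exists (vK K); rewrite inE eqxx.
exists (uK K); split; first by rewrite !inE eqxx orbT.
have dim_gt0 : (0 < gdim L d L)%N by rewrite gdim_last.
rewrite h_uv h_v; apply/negP => /eqP /(@const_mx_inj _ _ 1 _ _ dim_gt0 isT) y_vu.
by move: y_u; rewrite -y_vu y_v ltxx.
Qed.
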